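(* Let $n$ be a positive integer with $n\equiv 4\pmod 6$ and let $t=\lfloor n/3\rfloor$. Then the collection of subgroups of $S_n$ consisting of: all stabilizers of partitions of $\{1,\dots,n\}$ into two blocks of size $n/2$; $A_n$; and, for every $i$ with $1\le i\le t$ and $i\neq t-1$, all setwise stabilizers of $i$-element subsets of $\{1,\dots,n\}$, is a cover of $S_n$. In other words, the subgroups $S_{t-1}\times S_{n-t+1}$ can be removed from the cover consisting of all subgroups $S_{n/2}\wr S_2$, $A_n$, and $S_i\times S_{n-i}$ ($1\le i\le t$) while still covering $S_n$.
   Context: $S_n$ is the symmetric group on $\{1,\dots,n\}$. The stabilizer of a partition $\{B_1,B_2\}$ is the set of $g$ with $\{B_1^g,B_2^g\}=\{B_1,B_2\}$ (isomorphic to $S_{n/2}\wr S_2$); the setwise stabilizer of an $i$-subset is isomorphic to $S_i\times S_{n-i}$. A cover of a group is a collection of proper subgroups whose union is the group. *)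

From HB Require Import structures.
From mathcomp Require Import all_boot all_fingroup all_solvable.
Set Implicit Arguments. Unset Strict Implicit. Unset Printing Implicit Defensive.
Local Open Scope group_scope.

Definition is_cover (gT : finGroupType) (G : {set gT}) (C : {set {set gT}}) : bool :=
  [forall H in C, group_set H && (H \proper G)] && (\bigcup_(H in C) H == G).

Definition setstab (T : finType) (B : {set T}) : {set {perm T}} :=
  [set g : {perm T} | (fun x => g x) @: B == B].

Definition partstab (T : finType) (P : {set {set T}}) : {set {perm T}} :=
  [set g : {perm T} | [set (fun x => g x) @: X | X : {set T} in P] == P].

Definition cover_5_2 (n : nat) : {set {set {perm 'I_n}}} :=
  [set H : {set {perm 'I_n}} |
     [|| H == 'Alt_('I_n),
         [exists B : {set 'I_n}, (#|B| == n %/ 2) && (H == partstab [set B; ~: B])]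
       | [exists B : {set 'I_n},
            [&& 1 <= #|B| <= n %/ 3, #|B| != (n %/ 3).-1 & H == setstab B]]]].

From HB Require Import structures.
From mathcomp Require Import all_boot all_fingroup all_solvable.
From mathcomp Require Import zify.
Set Implicit Arguments. Unset Strict Implicit. Unset Printing Implicit Defensive.

(* Write n = 3t + 1, so that t is odd, and let g be a permutation of 'I_n.  If g
   has an orbit of length l with 1 <= l <= t and l <> t - 1, it stabilizes that
   orbit; if g is even it lies in A_n.  Otherwise every orbit has length t - 1
   or more than t, so an odd orbit has length at least t + 2.  As n is even, odd
   orbits come in pairs, and as g is odd, the number of orbits is odd: two odd
   orbits and a third orbit would have more than n points in total.  Hence all
   orbits of g have even length, and colouring each of them alternately yields
   a set B of size n/2 with g B = ~B, i.e. g stabilizes the partition {B, ~B}. *)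

Section GroupsOfTheCover.
Variable T : finType.

Lemma group_set_setstab (B : {set T}) : group_set (setstab B).
Proof.
apply/group_setP; split=> [|a b]; rewrite !inE.
  by apply/eqP; rewrite -[RHS]imset_id; apply: eq_imset => x; rewrite perm1.
move=> /eqP Ba /eqP Bb.
suff -> : [set (a * b)%g x | x in B] = [set b x | x in [set a x | x in B]] by rewrite Ba Bb.
by rewrite -imset_comp; apply: eq_imset => x; rewrite permM.
Qed.

Lemma group_set_partstab (P : {set {set T}}) : group_set (partstab P).
Proof.
apply/group_setP; split=> [|a b]; rewrite !inE.
  apply/eqP; rewrite -[RHS]imset_id; apply: eq_imset => X.
  by rewrite -[RHS]imset_id; apply: eq_imset => x; rewrite perm1.
move=> /eqP Pa /eqP Pb.
pose act (c : {perm T}) (X : {set T}) := [set c x | x in X].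
suff -> : [set act (a * b)%g X | X in P] = [set act b X | X in [set act a X | X in P]].
  by rewrite Pa Pb.
rewrite -imset_comp; apply: eq_imset => X /=.
by rewrite /act -imset_comp; apply: eq_imset => x; rewrite permM.
Qed.

Lemma Alt_properT : 1 < #|T| -> ('Alt_T)%g \proper [set: {perm T}].
Proof.
move/Alt_index; rewrite properEcard subsetT -(Lagrange (Alt_subset T)) => ->.
by rewrite ltn_Pmulr ?cardG_gt0.
Qed.

Lemma exists_notin (B : {set T}) : #|B| < #|T| -> exists y, y \notin B.
Proof.
move=> ltBT; have /card_gt0P[y] : 0 < #|~: B| by have := cardsC B; lia.
by rewrite inE; exists y.
Qed.

Lemma setstab_properT (B : {set T}) :
  0 < #|B| < #|T| -> setstab B \proper [set: {perm T}].
Proof.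
case/andP=> /card_gt0P[x Bx] /exists_notin[y nBy].
rewrite properT; apply: contra nBy => /eqP stabB.
have /[!inE] /eqP <- : tperm x y \in setstab B by rewrite stabB inE.
by apply/imsetP; exists x; rewrite ?tpermL.
Qed.

Lemma partstab_properT (B : {set T}) :
  1 < #|B| < #|T| -> partstab [set B; ~: B] \proper [set: {perm T}].
Proof.
case/andP=> /card_gt1P[x [x' [Bx Bx' x'x]]] /exists_notin[y nBy].
rewrite properT; apply/eqP => stabP.
have /[!inE] /eqP stabBP : tperm x y \in partstab [set B; ~: B] by rewrite stabP inE.
have : [set tperm x y z | z in B] \in [set B; ~: B].
  rewrite -stabBP; apply: (imset_f (fun X : {set T} => [set tperm x y z | z in X])).
  by rewrite !inE eqxx.
have y_img : y \in [set tperm x y z | z in B] by apply/imsetP; exists x; rewrite ?tpermL.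
have x'_img : x' \in [set tperm x y z | z in B].
  apply/imsetP; exists x' => //; rewrite tpermD // 1?eq_sym //.
  by apply: contraNneq nBy => <-.
case/set2P=> imgB; first by rewrite imgB (negbTE nBy) in y_img.
by rewrite imgB inE Bx' in x'_img.
Qed.

End GroupsOfTheCover.

Section FunctionalGraph.
Variables (T : finType) (f : T -> T).
Hypothesis injf : injective f.

Lemma findex_f x y :
  fconnect f x y -> findex f x (f y) = (findex f x y).+1 %% fingraph.order f x.
Proof.
move=> xy; have := findex_max xy; rewrite leq_eqVlt => /predU1P[last_i | lt_i].
  have : iter (fingraph.order f x) f x = x by exact: iter_order.
  by rewrite -last_i iterS iter_findex // => ->; rewrite modnn findex0.
by rewrite -[in f y](iter_findex xy) -iterS findex_iter // modn_small.
Qed.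

Lemma odd_findex_f x y : ~~ odd (fingraph.order f x) -> fconnect f x y ->
  odd (findex f x (f y)) = ~~ odd (findex f x y).
Proof. by move=> /negbTE even_x /findex_f->; rewrite odd_mod. Qed.

(* Colour each point by the parity of its distance from the root of its cycle;
   as cycles have even length, the colour also alternates across the wrap-around. *)
Lemma even_order_bicolouring : (forall x, ~~ odd (fingraph.order f x)) ->
  exists B : {set T}, forall y, (f y \in B) = (y \notin B).
Proof.
move=> even_order; pose r := froot f.
have r_f y : r (f y) = r y by apply/esym/rootP; [exact: fconnect_sym | exact: fconnect1].
have r_y y : fconnect f (r y) y by rewrite fconnect_sym //; exact: connect_root.
pose B := [set y | odd (findex f (r y) y)].
by exists B => y; rewrite !inE r_f odd_findex_f.
Qed.
End FunctionalGraph.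

Section PermOrbits.
Variables (T : finType) (g : {perm T}).

Lemma porbit_fconnect x y : (y \in porbit g x) = fconnect g x y.
Proof.
apply/porbitP/idP => [[i ->] | /iter_findex <-].
  by rewrite permX; apply: fconnect_iter.
by exists (findex g x y); rewrite permX.
Qed.

Lemma card_porbit x : #|porbit g x| = fingraph.order g x.
Proof. exact: eq_card (porbit_fconnect x). Qed.

Lemma imset_porbit x : [set g y | y in porbit g x] = porbit g x.
Proof.
apply/eqP; rewrite eqEcard card_imset ?leqnn ?andbT; last exact: perm_inj.
apply/subsetP=> _ /imsetP[y xy ->].
by move: xy; rewrite !porbit_fconnect => /connect_trans->; rewrite ?fconnect1.
Qed.

Lemma partition_porbits : partition (porbits g) [set: T].
Proof.
have actsT : [acts <[g]>%g, on [set: T] | 'P] by apply/actsP => a _ x; rewrite !inE.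
suff -> : porbits g = [set porbit g x | x in [set: T]] by rewrite porbitE orbit_partition.
by apply/setP=> O; apply/imsetP/imsetP=> -[x _ ->]; exists x.
Qed.

Lemma imset_perm (A C : {set T}) :
  (forall y, (g y \in C) = (y \in A)) -> [set g y | y in A] = C.
Proof.
by move=> gAC; apply/setP=> z; rewrite -(permKV g z) mem_imset ?gAC //; exact: perm_inj.
Qed.

Lemma sum_card_porbits : \sum_(O in porbits g) #|O| = #|T|.
Proof. by rewrite -cardsT (card_partition partition_porbits). Qed.

Lemma sum_card_porbits_sub (Q : {set {set T}}) :
  Q \subset porbits g -> \sum_(O in Q) #|O| <= #|T|.
Proof.
move=> sQ; have /and3P[_ /(trivIsetS sQ)/eqP-> _] := partition_porbits.
exact: max_card.
Qed.

Lemma odd_porbit_partner O : ~~ odd #|T| -> O \in porbits g -> odd #|O| ->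
  exists2 O', O' \in porbits g & (O' != O) && odd #|O'|.
Proof.
move=> even_T orbO odd_O.
have [/exists_inP // | /exists_inPn others_even] :=
  boolP [exists O' in porbits g, (O' != O) && odd #|O'|].
have : 2 %| \sum_(O' in porbits g | O' != O) #|O'|.
  apply: dvdn_sum => O' /andP[orbO' O'O]; rewrite dvdn2.
  by have := others_even O' orbO'; rewrite O'O.
by move: even_T; rewrite -sum_card_porbits (bigD1 O) //= oddD odd_O negbK dvdn2 => ->.
Qed.

Lemma porbits_even_of_odd_perm (a b : nat) :
  odd_perm g -> ~~ odd #|T| ->
  {in porbits g, forall O : {set T}, a <= #|O|} ->
  {in porbits g, forall O : {set T}, odd #|O| -> b <= #|O|} ->
  #|T| < 2 * b + a ->
  {in porbits g, forall O : {set T}, ~~ odd #|O|}.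
Proof.
move=> odd_g even_T ge_a odd_ge_b small O orbO; apply/negP => odd_O.
have [O' orbO' /andP[O'O odd_O']] := odd_porbit_partner even_T orbO odd_O.
have odd_orbits : odd #|porbits g| by move: odd_g; rewrite /odd_perm (negbTE even_T).
have sOO' : [set O; O'] \subset porbits g by rewrite subUset !sub1set orbO orbO'.
have : [set O; O'] \proper porbits g.
  have := subset_leq_card sOO'; have := modn2 #|porbits g|.
  by rewrite properEcard sOO' cards2 eq_sym O'O odd_orbits; lia.
case/properP=> _ [O'' orbO''] /[!inE] /norP[O''O O''O'].
have := sum_card_porbits_sub (Q := O'' |: [set O; O']).
rewrite subUset sub1set orbO'' sOO' => /(_ isT).
rewrite big_setU1 ?inE ?negb_or ?O''O ?O''O' // big_setU1 ?inE 1?eq_sym // big_set1 /=.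
move=> /(leq_trans _) sum_le; move: small; rewrite ltnNge => /negP; apply; apply: sum_le.
have := ge_a O'' orbO''; have := odd_ge_b O orbO odd_O; have := odd_ge_b O' orbO' odd_O'.
lia.
Qed.

Lemma even_porbits_partstab : {in porbits g, forall O : {set T}, ~~ odd #|O|} ->
  exists2 B : {set T}, #|B|.*2 = #|T| & g \in partstab [set B; ~: B].
Proof.
move=> even_orbits.
have even_order x : ~~ odd (fingraph.order g x).
  by rewrite -card_porbit even_orbits ?imset_f.
have [B gB] := even_order_bicolouring (@perm_inj _ g) even_order.
have gBC : [set g y | y in B] = ~: B by apply: imset_perm => y; rewrite inE gB negbK.
have gCB : [set g y | y in ~: B] = B by apply: imset_perm => y; rewrite inE gB.
exists B.
  have := cardsC B; rewrite -gBC card_imset; [lia | exact: perm_inj].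
by rewrite inE imsetU1 imset_set1 gBC gCB setUC.
Qed.
End PermOrbits.

Lemma cover_5_2_proper_subgroups n : 3 < n ->
  [forall H in cover_5_2 n, group_set H && (H \proper [set: {perm 'I_n}])].
Proof.
move=> n_gt3; apply/forall_inP => H /[!inE] /or3P[/eqP-> | | ].
- by rewrite groupP Alt_properT ?card_ord //; lia.
- case/existsP=> B /andP[/eqP cardB /eqP->].
  by rewrite group_set_partstab partstab_properT // cardB card_ord; lia.
- case/existsP=> B /and3P[/andP[B_gt0 B_le] _ /eqP->].
  by rewrite group_set_setstab setstab_properT // card_ord; lia.
Qed.

Lemma cover_5_2_covers n (g : {perm 'I_n}) : n %% 6 = 4 ->
  exists2 H, H \in cover_5_2 n & g \in H.
Proof.
move=> n_mod; set t := n %/ 3.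
have [/existsP[x /andP[small_x ne_x]] | /existsPn no_small] :=
  boolP [exists x, (0 < #|porbit g x| <= t) && (#|porbit g x| != t.-1)].
  exists (setstab (porbit g x)); last by rewrite inE imset_porbit.
  by rewrite inE; apply/or3P/Or33/existsP; exists (porbit g x); rewrite small_x ne_x eqxx.
have [g_even | g_odd] := boolP (g \in ('Alt_('I_n))%g).
  by exists ('Alt_('I_n))%g; rewrite // inE eqxx.
have large_orbits O : O \in porbits g -> 0 < #|O| /\ (#|O| = t.-1 \/ t < #|O|).
  case/imsetP=> x _ ->; have := no_small x; have := card_porbit_neq0 g x.
  by rewrite negb_and; lia.
have [B cardB gB] : exists2 B : {set 'I_n}, #|B|.*2 = #|'I_n| & g \in partstab [set B; ~: B].
  apply/even_porbits_partstab/(porbits_even_of_odd_perm (a := maxn 1 t.-1) (b := t.+2)).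
  - by rewrite Alt_even negbK in g_odd.
  - by rewrite card_ord -(odd_mod n (erefl : odd 6 = false)) n_mod.
  - by move=> O /large_orbits; lia.
  - by move=> O /large_orbits + odd_O; have := modn2 #|O|; rewrite odd_O; lia.
  - by rewrite card_ord; lia.
exists (partstab [set B; ~: B]) => //.
rewrite inE; apply/or3P/Or32/existsP; exists B.
by rewrite card_ord in cardB; rewrite eqxx andbT; apply/eqP; lia.
Qed.

Theorem lemma5p2 (n : nat) (hn : 0 < n) (hmod : n %% 6 = 4) :
  is_cover [set: {perm 'I_n}] (cover_5_2 n).
Proof.
apply/andP; split; first by apply: cover_5_2_proper_subgroups; lia.
rewrite eqEsubset subsetT /=; apply/subsetP=> g _; apply/bigcupP.
by have [H] := cover_5_2_covers g hmod; exists H.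
Qed.
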